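(* Let $K$ be a field of characteristic zero. For $0\le i\le n-1$ let $E_i$ be the injective hull of $K$ over $K[X_1,\ldots,X_i]$ ($E_0=K$), and let $E_{n-1}[X_n]=\bigoplus_{j\ge0}E_{n-1}X_n^j$ (which is isomorphic to $H^{n-1}_{(X_1,\ldots,X_{n-1})}(K[X_1,\ldots,X_n])$). Then for $c=1,\ldots,n$, \[H_i(\partial_c,\partial_{c+1},\ldots,\partial_n;E_{n-1}[X_n])=\begin{cases}0& i\ne1,\\ E_{c-1}& i=1.\end{cases}\]
   Context: $E_i=\bigoplus_{r_1,\ldots,r_i\ge0}K\,\frac{1}{X_1\cdots X_iX_1^{r_1}\cdots X_i^{r_i}}$, where $X_j$ lowers $r_j$ by one (giving $0$ if $r_j=0$) and $\partial_j$ sends the basis element with exponent $r_j$ to $(-r_j-1)$ times the one with $r_j$ replaced by $r_j+1$. On $E_{n-1}[X_n]$, $X_j,\partial_j$ ($j<n$) act on the $E_{n-1}$ factor and $X_n,\partial_n$ act on the polynomial variable $X_n$ by multiplication and differentiation. $H_i(\partial_c,\ldots,\partial_n;N)$ is the $i$-th Koszul homology with respect to the commuting $K$-linear maps $\partial_c,\ldots,\partial_n$. *)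

From mathcomp Require Import all_boot all_order all_algebra.
Set Implicit Arguments. Unset Strict Implicit. Unset Printing Implicit Defensive.
Import GRing.Theory.
Local Open Scope ring_scope.

(* Exponent vectors (r_1,...,r_p) of the basis element 1/(X_1..X_p X_1^r_1..X_p^r_p) of E_p. *)
Definition Idx (p : nat) := {ffun 'I_p -> nat}.

(* Variables are numbered from 0: variable j is the paper's X_{j+1}. *)
Definition updE p (j : nat) (s : nat -> nat) (r : Idx p) : Idx p :=
  [ffun i : 'I_p => if val i == j then s (r i) else r i].
Definition getE p (r : Idx p) (j : nat) : nat := (\sum_(i : 'I_p | val i == j) r i)%N.

(* Elements of E_p (or of any space with basis T): coefficient functions with finite support. *)
Definition finsupp (K : fieldType) (T : eqType) (f : T -> K) : Prop :=
  exists s : seq T, forall x, x \notin s -> f x = 0.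

(* Action of X_j and d_j (j < p) on E_p, in coefficient form:
   X_j lowers r_j (killing r_j = 0), d_j sends exponent r_j to (-r_j-1) * exponent r_j+1. *)
Definition Xe (K : fieldType) p (j : nat) (f : Idx p -> K) : Idx p -> K :=
  fun r => f (updE j S r).
Definition De (K : fieldType) p (j : nat) (f : Idx p -> K) : Idx p -> K :=
  fun r => - (getE r j)%:R * f (updE j predn r).

(* E_{n-1}[X_n]: basis indexed by (r, k) <-> e_r * X_n^k. *)
Definition EP (n : nat) := (Idx n.-1 * nat)%type.

Definition DP (K : fieldType) n (g : EP n -> K) : EP n -> K :=
  fun x => (x.2.+1)%:R * g (x.1, x.2.+1).

(* d_v on E_{n-1}[X_n], v = 0..n-1 (v = n-1 is d_n). *)
Definition Dfull (K : fieldType) n (v : nat) (g : EP n -> K) : EP n -> K :=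
  if (v < n.-1)%N then fun x => De v (fun r => g (r, x.2)) x.1 else DP g.
Definition Xfull (K : fieldType) n (v : nat) (g : EP n -> K) : EP n -> K :=
  fun x => Xe v (fun r => g (r, x.2)) x.1.

(* Koszul complex of d_c,...,d_n (m = n-c+1 maps; map t : 'I_m is d_{c+t},
   i.e. 0-based variable c-1+t).  A chain assigns to each subset S of 'I_m
   the coefficient of e_S. *)
Definition chainT (K : fieldType) n c := {set 'I_(n.+1 - c)} -> EP n -> K.

Definition koszul_d (K : fieldType) n c (w : chainT K n c) : chainT K n c :=
  fun S x => \sum_(t : 'I_(n.+1 - c) | t \notin S)
     (-1) ^+ #|[set s in S | (s < t)%N]| * Dfull (c.-1 + t) (w (t |: S)) x.

Definition is_chain (K : fieldType) n c (i : nat) (w : chainT K n c) : Prop :=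
  (forall S : {set 'I_(n.+1 - c)}, #|S| != i -> forall x, w S x = 0) /\ (forall S, finsupp (w S)).

Definition is_cycle (K : fieldType) n c (i : nat) (w : chainT K n c) : Prop :=
  is_chain i w /\ forall S x, koszul_d w S x = 0.

Definition is_boundary (K : fieldType) n c (i : nat) (w : chainT K n c) : Prop :=
  exists u : chainT K n c, is_chain i.+1 u /\ forall S x, w S x = koszul_d u S x.

From mathcomp Require Import all_boot all_order all_algebra.
From mathcomp Require Import zify ring.
Import GRing.Theory.
Local Open Scope ring_scope.
Set Implicit Arguments. Unset Strict Implicit.

(* Each d_j acts monomially on the basis e_r X_n^k.  For j = c, ..., n-1 it
   is injective on E_{n-1}, with image spanned by the e_r with r_j > 0, and
   d_n is surjective on K[X_n] with kernel K; in characteristic zero both have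
   explicit one-sided inverses h_j.  On e_A with u = min A, let h act as
   e_{A - u} h_u, cut down to the basis vectors with r_c = ... = r_{c+u-1} = 0.
   In dh + hd the terms with t > u cancel and those with t < u telescope,
   leaving dh + hd = id - P, where P projects onto e_n E_{c-1} (degree 1,
   r_c = ... = r_{n-1} = 0, k = 0).  So cycles of degree i <> 1 are
   boundaries, and P identifies H_1 with E_{c-1}. *)

Lemma getE_ord p (r : Idx p) (i : 'I_p) : getE r i = r i.
Proof. by rewrite /getE (big_pred1 i) // => j /=; rewrite -val_eqE. Qed.

Lemma getE_out p (r : Idx p) j : (p <= j)%N -> getE r j = 0%N.
Proof.
move=> hj; rewrite /getE big_pred0 // => i; apply/negbTE.
by apply/eqP => e; move: (ltn_ord i); rewrite e ltnNge hj.
Qed.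

Lemma Idx_getE_inj p (r r' : Idx p) : (forall j, getE r j = getE r' j) -> r = r'.
Proof. by move=> h; apply/ffunP => i; rewrite -!getE_ord h. Qed.

Lemma getE_updE p j s (r : Idx p) j' :
  getE (updE j s r) j' = if (j' == j) && (j < p)%N then s (getE r j) else getE r j'.
Proof.
case: (ltnP j' p) => hj'; last first.
  rewrite getE_out //; have [e|] := eqVneq j' j => //=; last by rewrite getE_out.
  by subst j'; rewrite ltnNge hj' /= getE_out.
have -> : j' = Ordinal hj' by [].
rewrite !getE_ord /updE ffunE /=; have [e|] //= := eqVneq j' j; subst j.
by rewrite hj' -getE_ord.
Qed.

Lemma updE_comp p j s s' (r : Idx p) :
  updE j s (updE j s' r) = updE j (fun a => s (s' a)) r.
Proof. by apply/ffunP => i; rewrite !ffunE; case: eqP. Qed.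

Lemma updE_id p j s (r : Idx p) : s (getE r j) = getE r j -> updE j s r = r.
Proof.
move=> h; apply: Idx_getE_inj => j'; rewrite getE_updE.
by case: eqP => [->|] //=; case: ifP.
Qed.

Lemma updE_comm p j j' s s' (r : Idx p) : j != j' ->
  updE j s (updE j' s' r) = updE j' s' (updE j s r).
Proof.
move=> ne; apply/ffunP => i; rewrite !ffunE.
by case: eqP => [e1|]; case: eqP => [e2|] //; move: ne; rewrite -e1 -e2 eqxx.
Qed.

Lemma updE_predn_succ p j (r : Idx p) : updE j predn (updE j S r) = r.
Proof. by rewrite updE_comp updE_id. Qed.

Lemma updE_succ_predn p j (r : Idx p) b :
  getE r j = b.+1 -> updE j S (updE j predn r) = r.
Proof. by move=> h; rewrite updE_comp updE_id // h. Qed.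

Definition resize_idx p q (r : Idx p) : Idx q := [ffun i : 'I_q => getE r i].

Lemma getE_resize p q (r : Idx p) j :
  getE (resize_idx q r) j = if (j < q)%N then getE r j else 0%N.
Proof.
case: (ltnP j q) => h; last by rewrite getE_out.
by have -> : j = Ordinal h by []; rewrite getE_ord ffunE.
Qed.

Lemma resize_idxK p q (r : Idx p) : (p <= q)%N -> resize_idx p (resize_idx q r) = r.
Proof.
move=> hpq; apply: Idx_getE_inj => j; rewrite !getE_resize.
case: ltnP => hj; last by rewrite getE_out.
by rewrite (leq_trans hj hpq).
Qed.

Lemma resize_idx_truncK p q (r : Idx q) :
  (forall j, (p <= j)%N -> getE r j = 0%N) -> resize_idx q (resize_idx p r) = r.
Proof.
move=> hr; apply: Idx_getE_inj => j; rewrite !getE_resize.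
case: ifP => [_|h]; last by rewrite getE_out // leqNgt h.
by case: ltnP => // /hr.
Qed.

Lemma updE_resize p q j s (r : Idx p) : (j < p)%N -> (j < q)%N ->
  updE j s (resize_idx q r) = resize_idx q (updE j s r).
Proof.
move=> hp hq; apply: Idx_getE_inj => j'.
rewrite getE_updE !getE_resize getE_updE hq hp !andbT.
by have [->|] := eqVneq j' j; rewrite ?hq.
Qed.

Section OrdinalSets.
Variables (R : pzRingType) (m : nat).

Definition min_elt (A : {set 'I_m}) := [pick u in A | [forall s in A, (u <= s)%N]].

Lemma min_elt_eq (A : {set 'I_m}) (u : 'I_m) :
  u \in A -> (forall s : 'I_m, s \in A -> (u <= s)%N) -> min_elt A = Some u.
Proof.
move=> uA hu; rewrite /min_elt; case: pickP => [u' /andP [u'A /forallP h']|].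
  congr Some; apply: val_inj; apply/eqP; rewrite eqn_leq hu // andbT.
  by move: (h' u); rewrite uA.
move/(_ u); rewrite uA /= => /negbT/negP; case; apply/forallP => s.
by apply/implyP => /hu.
Qed.

Lemma min_elt0 : min_elt set0 = None.
Proof. by rewrite /min_elt; case: pickP => // u; rewrite inE. Qed.

(* The sign of e_t /\ e_A in the Koszul complex. *)
Definition koszul_sign (A : {set 'I_m}) (t : 'I_m) : R :=
  (-1) ^+ #|[set s in A | (s < t)%N]|.

Lemma koszul_sign_below (A : {set 'I_m}) (u t : 'I_m) :
  (forall s : 'I_m, s \in A -> (u <= s)%N) -> (t <= u)%N -> koszul_sign A t = 1.
Proof.
move=> hu htu; rewrite /koszul_sign.
suff -> : [set s in A | (s < t)%N] = set0 by rewrite cards0.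
apply/setP => s; rewrite !inE; case sA: (s \in A) => //=.
by apply/negbTE; rewrite -leqNgt (leq_trans htu (hu _ sA)).
Qed.

Lemma koszul_signD1 (A : {set 'I_m}) (u t : 'I_m) : u \in A -> (u < t)%N ->
  koszul_sign A t = - koszul_sign (A :\ u) t.
Proof.
move=> uA hut; rewrite /koszul_sign.
have -> : [set s in A | (s < t)%N] = u |: [set s in A :\ u | (s < t)%N].
  by apply/setP => s; rewrite !inE; case: (eqVneq s u) => [->|] //=; rewrite uA hut.
by rewrite cardsU1 !inE eqxx /= exprD expr1 mulN1r.
Qed.

End OrdinalSets.

Section KoszulComplex.
Variables (K : fieldType) (n c : nat).
Hypothesis char_K : [pchar K] =i pred0.
Hypotheses (c_gt0 : (1 <= c)%N) (c_le_n : (c <= n)%N).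

Local Notation m := (n.+1 - c)%N.
Local Notation chain := (chainT K n c).
Local Notation var t := (c.-1 + t)%N.

Definition on_E t : bool := (var t < n.-1)%N.

Lemma on_EE t : on_E t = (t.+1 < m)%N.
Proof. by rewrite /on_E; apply/idP/idP => /ltP h; apply/ltP; lia. Qed.

Lemma last_dir_subproof : (m.-1 < m)%N.
Proof. by rewrite prednK // subn_gt0 ltnS. Qed.

Definition last_dir : 'I_m := Ordinal last_dir_subproof.

Lemma on_E_last : on_E m.-1 = false.
Proof. by rewrite on_EE; apply/negbTE; rewrite -leqNgt; apply/leP; lia. Qed.

Definition dcoef t (x : EP n) : K :=
  if on_E t then - (getE x.1 (var t))%:R else (x.2.+1)%:R.
Definition dshift t (x : EP n) : EP n :=
  if on_E t then (updE (var t) predn x.1, x.2) else (x.1, x.2.+1).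
Definition hcoef t (x : EP n) : K :=
  if on_E t then - ((getE x.1 (var t)).+1%:R)^-1
  else if x.2 is k.+1 then (k.+1%:R)^-1 else 0.
Definition hshift t (x : EP n) : EP n :=
  if on_E t then (updE (var t) S x.1, x.2) else (x.1, x.2.-1).

Definition low_exps_zero t (r : Idx n.-1) : bool :=
  all (fun s => getE r (var s) == 0%N) (iota 0 t).
Definition hcoef_cut t (x : EP n) : K := (low_exps_zero t x.1)%:R * hcoef t x.

Lemma Dfull_monomial t (g : EP n -> K) x : Dfull (var t) g x = dcoef t x * g (dshift t x).
Proof. by rewrite /Dfull /dcoef /dshift /on_E; case: ifP. Qed.

Lemma natS_neq0 k : (k.+1)%:R != 0 :> K.
Proof. by have /pcharf0P -> := char_K. Qed.

Lemma add1r_nat_neq0 k : 1 + k%:R != 0 :> K.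
Proof. by rewrite addrC natr1 natS_neq0. Qed.

Lemma low_exps_zeroS t r :
  low_exps_zero t.+1 r = low_exps_zero t r && (getE r (var t) == 0%N).
Proof. by rewrite /low_exps_zero -addn1 iotaD all_cat /= andbT. Qed.

Lemma low_exps_zero_updE t j s r :
  (var t <= j)%N -> low_exps_zero t (updE j s r) = low_exps_zero t r.
Proof.
move=> h; apply: eq_in_all => s' /=; rewrite mem_iota /= add0n => hs.
by rewrite getE_updE (_ : (var s' == j) = false) //; apply/eqP; lia.
Qed.

Lemma low_exps_zeroP t r s : low_exps_zero t r -> (s < t)%N -> getE r (var s) = 0%N.
Proof. by move=> /allP h hs; apply/eqP; apply: h; rewrite mem_iota. Qed.

Lemma d_hcut_E t (g : EP n -> K) x : on_E t ->
  dcoef t x * (hcoef_cut t (dshift t x) * g (hshift t (dshift t x)))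
  = (low_exps_zero t x.1)%:R * g x - (low_exps_zero t.+1 x.1)%:R * g x.
Proof.
case: x => r k /= hE; have hlt : (var t < n.-1)%N := hE.
rewrite /dcoef /hcoef_cut /hcoef /hshift /dshift hE /= low_exps_zeroS.
rewrite low_exps_zero_updE // getE_updE eqxx hlt /=.
case e: (getE r (var t)) => [|b] /=; first by rewrite andbT oppr0 mul0r subrr.
rewrite andbF mul0r subr0 (updE_succ_predn e).
case: (low_exps_zero t r); rewrite ?mul0r ?mulr0 //.
by rewrite mul1r mulrA mulrNN mulfV ?mul1r // natS_neq0.
Qed.

Lemma d_hcut_last (g : EP n -> K) x :
  dcoef m.-1 x * (hcoef_cut m.-1 (dshift m.-1 x) * g (hshift m.-1 (dshift m.-1 x)))
  = (low_exps_zero m.-1 x.1)%:R * g x.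
Proof.
case: x => r k; rewrite /dcoef /hcoef_cut /hcoef /hshift /dshift on_E_last /=.
by field; rewrite add1r_nat_neq0.
Qed.

Lemma sum_d_hcut u (g : EP n -> K) x : (u <= m.-1)%N ->
  \sum_(0 <= t < u) dcoef t x * (hcoef_cut t (dshift t x) * g (hshift t (dshift t x)))
  = g x - (low_exps_zero u x.1)%:R * g x.
Proof.
elim: u => [|u IH] hu; first by rewrite big_nil mul1r subrr.
rewrite big_nat_recr //= IH ?(ltnW hu) // d_hcut_E ?addrA ?subrK //.
by rewrite on_EE; apply/ltP; move/leP: hu; lia.
Qed.

Lemma hcut_d_E u (g : EP n -> K) x : on_E u ->
  hcoef_cut u x * (dcoef u (hshift u x) * g (dshift u (hshift u x)))
  = (low_exps_zero u x.1)%:R * g x.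
Proof.
case: x => r k hE; have hlt : (var u < n.-1)%N := hE.
rewrite /dcoef /hcoef_cut /hcoef /hshift /dshift hE /= updE_predn_succ.
by rewrite getE_updE eqxx hlt /=; field; rewrite add1r_nat_neq0.
Qed.

Lemma hcut_d_last (g : EP n -> K) x :
  hcoef_cut m.-1 x * (dcoef m.-1 (hshift m.-1 x) * g (dshift m.-1 (hshift m.-1 x)))
  = (low_exps_zero m.-1 x.1 && (x.2 != 0%N))%:R * g x.
Proof.
case: x => r [|k]; rewrite /dcoef /hcoef_cut /hcoef /hshift /dshift on_E_last /=.
  by rewrite andbF !mulr0 !mul0r.
by rewrite andbT; field; rewrite add1r_nat_neq0.
Qed.

Lemma hshift_dshift u t x : on_E u -> (u < t)%N ->
  hshift u (dshift t x) = dshift t (hshift u x).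
Proof.
case: x => r k hE hut; rewrite /hshift /dshift hE /=; case: ifP => //= _.
by rewrite updE_comm //; apply/eqP => e; move/ltP: hut; lia.
Qed.

Lemma dcoef_hcoef_cut u t x : on_E u -> (u < t)%N ->
  dcoef t x * hcoef_cut u (dshift t x) = hcoef_cut u x * dcoef t (hshift u x).
Proof.
case: x => r k hE hut; rewrite /dcoef /hcoef_cut /hcoef /hshift /dshift hE /=.
case: ifP => /= _; last by rewrite mulrC.
rewrite low_exps_zero_updE; last by apply/leP; move/ltP: hut; lia.
rewrite !getE_updE; case: ifP => [/andP[/eqP e _]|_]; first by lia.
by case: ifP => [/andP[/eqP e _]|_]; [lia | rewrite mulrC].
Qed.

Lemma hcoef_cut_dcoef_lt u t x : (u < m)%N -> (t < u)%N ->
  hcoef_cut u x * dcoef t (hshift u x) = 0.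
Proof.
case: x => r k hum htu; rewrite /hcoef_cut.
case hQ: (low_exps_zero u r); last by rewrite !mul0r.
have htE : on_E t by rewrite on_EE; lia.
have h0 := low_exps_zeroP hQ htu.
rewrite /dcoef /hshift htE; case: ifP => _ /=; last by rewrite h0 oppr0 !mulr0.
by rewrite getE_updE (_ : (var t == var u) = false) /= ?h0 ?oppr0 ?mulr0 //; apply/eqP; lia.
Qed.

Lemma dshift_hshift u x : hcoef_cut u x != 0 -> dshift u (hshift u x) = x.
Proof.
case: x => r k; rewrite /hcoef_cut /hcoef /dshift /hshift.
by case: ifP => _ /=; [rewrite updE_predn_succ | case: k => //=; rewrite mulr0 eqxx].
Qed.

Definition homotopy (w : chain) : chain :=
  fun A x => if min_elt A is Some u then hcoef_cut u x * w (A :\ u) (hshift u x) else 0.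

Definition proj_H1 (w : chain) : chain :=
  fun A x => if (A == [set last_dir]) && low_exps_zero m.-1 x.1 && (x.2 == 0%N)
             then w A x else 0.

Lemma homotopy_min (w : chain) (A : {set 'I_m}) (u : 'I_m) y :
  u \in A -> (forall s : 'I_m, s \in A -> (u <= s)%N) ->
  homotopy w A y = hcoef_cut u y * w (A :\ u) (hshift u y).
Proof. by move=> uA hu; rewrite /homotopy (min_elt_eq uA hu). Qed.

Lemma homotopy0 g (A : {set 'I_m}) x : (forall A x, g A x = 0) -> homotopy g A x = 0.
Proof. by move=> h; rewrite /homotopy; case: min_elt => // u; rewrite h mulr0. Qed.

Lemma koszul_dE (w : chain) A x : koszul_d w A x =
  \sum_(t | t \notin A) koszul_sign K A t * (dcoef t x * w (t |: A) (dshift t x)).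
Proof. by apply: eq_bigr => t _; rewrite Dfull_monomial. Qed.

Lemma homotopy_identity_set0 (w : chain) x :
  koszul_d (homotopy w) set0 x = w set0 x - proj_H1 w set0 x.
Proof.
rewrite /proj_H1 (_ : (set0 == _) = false) /=; last first.
  by apply/negbTE/eqP => e; move: (set11 last_dir); rewrite -e inE.
rewrite subr0 koszul_dE.
transitivity (\sum_(0 <= t < m.-1.+1)
                dcoef t x * (hcoef_cut t (dshift t x) * w set0 (hshift t (dshift t x)))).
  rewrite (_ : m.-1.+1 = m) ?big_mkord; last by lia.
  apply: eq_big => [t|t _]; first by rewrite in_set0.
  rewrite (@koszul_sign_below _ _ _ t) ?mul1r //; last by move=> s; rewrite inE.
  rewrite (@homotopy_min w _ t) ?setU11 //; last by move=> s; rewrite setU0 inE => /eqP ->.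
  by rewrite setU1K ?in_set0.
by rewrite big_nat_recr //= sum_d_hcut // d_hcut_last subrK.
Qed.

(* Terms of d(h w) with t > min A cancel against the corresponding ones of h(d w). *)
Lemma koszul_homotopy_cancel (w : chain) (A : {set 'I_m}) (u t : 'I_m) x :
  u \in A -> (forall s : 'I_m, s \in A -> (u <= s)%N) -> (u < t)%N ->
  koszul_sign K A t * (dcoef t x * homotopy w (t |: A) (dshift t x)) +
  hcoef_cut u x * (koszul_sign K (A :\ u) t *
    (dcoef t (hshift u x) * w (t |: (A :\ u)) (dshift t (hshift u x)))) = 0.
Proof.
move=> uA hmin hut.
have hE : on_E u by rewrite on_EE; have := ltn_ord t; lia.
rewrite (koszul_signD1 _ uA hut) (@homotopy_min w _ u); first last.
- by move=> s; rewrite !inE => /orP [/eqP ->|/hmin //]; exact: ltnW.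
- by rewrite !inE uA orbT.
have -> : (t |: A) :\ u = t |: (A :\ u).
  apply/setP => s; rewrite !inE; case: (eqVneq s t) => [->|] //=.
  by rewrite andbT; apply/eqP => e; move: hut; rewrite e ltnn.
rewrite hshift_dshift // (mulrA (dcoef t x)) dcoef_hcoef_cut //.
set W := w _ _; set q := hcoef_cut _ _; set d := dcoef _ _; set s := koszul_sign _ _ _.
ring.
Qed.

(* The terms with t < min A telescope. *)
Lemma koszul_homotopy_low (w : chain) (A : {set 'I_m}) (u : 'I_m) x :
  u \in A -> (forall s : 'I_m, s \in A -> (u <= s)%N) ->
  \sum_(t < m | (t \notin A) && (t < u)%N)
    (koszul_sign K A t * (dcoef t x * homotopy w (t |: A) (dshift t x)) +
     hcoef_cut u x * (koszul_sign K (A :\ u) t *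
       (dcoef t (hshift u x) * w (t |: A :\ u) (dshift t (hshift u x)))))
  = w A x - (low_exps_zero u x.1)%:R * w A x.
Proof.
move=> uA hmin.
pose F t := dcoef t x * (hcoef_cut t (dshift t x) * w A (hshift t (dshift t x))).
transitivity (\sum_(t < m | (t < u)%N) F t).
  apply: eq_big => [t|t /andP [tA htu]].
    case htu: (t < u)%N; rewrite ?andbF ?andbT //.
    by apply/negP => tA; move: (hmin _ tA); lia.
  rewrite (@koszul_sign_below _ _ A u t) ?mul1r ?(ltnW htu) //.
  rewrite (@homotopy_min w _ t); first last.
  - by move=> s; rewrite !inE => /orP [/eqP -> //|/hmin]; lia.
  - by rewrite setU11.
  rewrite setU1K // [X in _ + X]mulrCA (mulrA (hcoef_cut u x)).
  by rewrite hcoef_cut_dcoef_lt // mul0r mulr0 addr0.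
rewrite -(big_ord_widen m F (ltnW (ltn_ord u))) -(big_mkord xpredT F).
by rewrite sum_d_hcut //; have := ltn_ord u; lia.
Qed.

Lemma homotopy_identity_min (w : chain) (A : {set 'I_m}) (u : 'I_m) x :
  u \in A -> (forall s : 'I_m, s \in A -> (u <= s)%N) ->
  koszul_d (homotopy w) A x + homotopy (koszul_d w) A x = w A x - proj_H1 w A x.
Proof.
move=> uA hmin.
rewrite (homotopy_min (koszul_d w) x uA hmin) !koszul_dE.
rewrite [X in _ + _ * X](bigD1 u) /=; last by rewrite !inE eqxx.
rewrite (@koszul_sign_below _ _ (A :\ u) u u) ?mul1r //; last first.
  by move=> s; rewrite !inE => /andP [_ /hmin].
rewrite (setD1K uA) mulrDr mulr_sumr.
rewrite [X in _ + (_ + X)](eq_bigl (fun t => t \notin A)); last first.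
  move=> t; rewrite !inE; case: (eqVneq t u) => [->|] /=; first by rewrite uA.
  by rewrite andbT.
rewrite addrCA -big_split /= (bigID (fun t : 'I_m => (t < u)%N)) /=.
rewrite [X in _ + (_ + X)]big1 ?addr0; last first.
  move=> t /andP [tA]; rewrite -leqNgt leq_eqVlt => /orP [/eqP e|hut].
    by move: tA; rewrite (_ : t = u) ?uA //; apply: val_inj.
  exact: koszul_homotopy_cancel.
rewrite koszul_homotopy_low //.
case hE: (on_E u).
  rewrite hcut_d_E // /proj_H1 (_ : (A == _) = false) /=; first by rewrite subr0 addrC subrK.
  apply/negbTE/eqP => e; move: uA; rewrite e inE => /eqP e'.
  by move: hE; rewrite e' /= on_E_last.
have hu : nat_of_ord u = m.-1 by move: hE; rewrite on_EE; have := ltn_ord u; lia.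
have -> : A = [set last_dir].
  apply/setP => s; rewrite inE; apply/idP/eqP => [sA|->].
    by apply: val_inj => /=; have := hmin _ sA; have := ltn_ord s; lia.
  by rewrite (_ : last_dir = u) //; apply: val_inj; rewrite /= hu.
rewrite hu hcut_d_last /proj_H1 eqxx /=.
by case: (low_exps_zero _ _); case: (x.2 == 0%N);
   rewrite /= ?mul0r ?mul1r ?subrr ?subr0 ?addr0 ?add0r.
Qed.

Lemma homotopy_identity (w : chain) (A : {set 'I_m}) x :
  koszul_d (homotopy w) A x + homotopy (koszul_d w) A x = w A x - proj_H1 w A x.
Proof.
have [->|/set0Pn [u1 u1A]] := eqVneq A set0.
  by rewrite {2}/homotopy min_elt0 addr0 homotopy_identity_set0.
case: (arg_minnP (fun u : 'I_m => val u) u1A) => u uA hmin.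
exact: homotopy_identity_min uA hmin.
Qed.

Lemma homotopy_finsupp (w : chain) :
  (forall A, finsupp (w A)) -> forall A, finsupp (homotopy w A).
Proof.
move=> hf A; rewrite /finsupp /homotopy; case: (min_elt A) => [u|]; last by exists [::].
have [s hs] := hf (A :\ u); exists (map (dshift u) s) => x hx.
have [->|hq] := eqVneq (hcoef_cut u x) 0; first by rewrite mul0r.
rewrite hs ?mulr0 //; apply: contra hx => hin; rewrite -(dshift_hshift hq); exact: map_f.
Qed.

Lemma homotopy_deg i (w : chain) : (forall A : {set 'I_m}, #|A| != i -> forall x, w A x = 0) ->
  forall A : {set 'I_m}, #|A| != i.+1 -> forall x, homotopy w A x = 0.
Proof.
move=> hw A hA x; rewrite /homotopy /min_elt; case: pickP => [u /andP [uA _]|] //.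
by rewrite hw ?mulr0 //; apply: contra hA; rewrite (cardsD1 u A) uA => /eqP ->.
Qed.

Lemma homotopy_chain i (w : chain) : is_chain i w -> is_chain i.+1 (homotopy w).
Proof. by case=> hdeg hfin; split; [exact: homotopy_deg | exact: homotopy_finsupp]. Qed.

Lemma cycle_sub_proj_boundary i (w : chain) :
  is_cycle i w -> forall A x, w A x - proj_H1 w A x = koszul_d (homotopy w) A x.
Proof.
by move=> [_ hcyc] A x; rewrite -homotopy_identity homotopy0 // addr0.
Qed.

Lemma cycle_is_boundary i (w : chain) : i != 1%N -> is_cycle i w -> is_boundary i w.
Proof.
move=> hi hw; exists (homotopy w); split; first exact: homotopy_chain hw.1.
move=> A x; rewrite -(cycle_sub_proj_boundary hw) /proj_H1.
case: ifP => [/andP [/andP [/eqP eA _] _]|_]; last by rewrite subr0.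
by rewrite hw.1.1 ?subr0 // eA cards1 eq_sym.
Qed.

(* H_1 ~= E_{c-1}: read off the coefficient of e_n * e_r * X_n^0. *)
Definition H1_coef (w : chain) (r : Idx c.-1) : K :=
  w [set last_dir] (resize_idx n.-1 r, 0%N).

Lemma c1_le_n1 : (c.-1 <= n.-1)%N.
Proof. by lia. Qed.

Lemma resize_low_exps_zero (r : Idx n.-1) :
  low_exps_zero m.-1 r -> resize_idx n.-1 (resize_idx c.-1 r) = r.
Proof.
move=> hr; apply: resize_idx_truncK => j hj.
case: (ltnP j n.-1) => h2; last by rewrite getE_out.
rewrite (_ : j = var (j - c.-1)); last by lia.
by rewrite (low_exps_zeroP hr) //; lia.
Qed.

Lemma getE_resize_var (r : Idx c.-1) t :
  getE (resize_idx n.-1 r) (var t) = 0%N.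
Proof. by rewrite getE_resize getE_out ?if_same //; lia. Qed.

Lemma H1_coef_finsupp (w : chain) : is_cycle 1 w -> finsupp (H1_coef w).
Proof.
move=> [[_ hfin] _]; have [s hs] := hfin [set last_dir].
exists (map (fun y : EP n => resize_idx c.-1 y.1) s) => r hr; rewrite /H1_coef hs //.
apply: contra hr => hin; rewrite -[r](resize_idxK _ c1_le_n1).
exact: (map_f (fun y : EP n => resize_idx c.-1 y.1) hin).
Qed.

(* The cycle supported on e_n * E_{c-1}. *)
Definition H1_lift (e : Idx c.-1 -> K) : chain := fun A x =>
  if (A == [set last_dir]) && (x.2 == 0%N)
     && (x.1 == resize_idx n.-1 (resize_idx c.-1 x.1))
  then e (resize_idx c.-1 x.1) else 0.

Lemma H1_lift_cycle e : finsupp e -> is_cycle 1 (H1_lift e).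
Proof.
move=> [s hs]; split; first split.
- move=> A hA x; rewrite /H1_lift; case: ifP => // /andP [/andP [/eqP eA _] _].
  by move: hA; rewrite eA cards1.
- move=> A; exists (map (fun r => (resize_idx n.-1 r, 0%N)) s) => x hx.
  rewrite /H1_lift; case: ifP => // /andP [/andP [_ /eqP h2] /eqP h1].
  rewrite hs //; apply: contra hx => hin; rewrite (surjective_pairing x) h2 h1.
  exact: (map_f (fun r => (resize_idx n.-1 r, 0%N)) hin).
move=> A x; rewrite koszul_dE; apply: big1 => t tA.
rewrite /H1_lift; case: ifP => [/andP [/andP [/eqP eL h2] _]|]; last by rewrite !mulr0.
have : t \in [set last_dir] by rewrite -eL setU11.
by rewrite inE => /eqP ht; move: h2; rewrite /dshift ht /= on_E_last.
Qed.

Lemma H1_coef_lift e r : H1_coef (H1_lift e) r = e r.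
Proof. by rewrite /H1_coef /H1_lift eqxx /= (resize_idxK r c1_le_n1) eqxx. Qed.

Lemma H1_coef_eq0 (w : chain) :
  is_cycle 1 w -> (forall r, H1_coef w r = 0) <-> is_boundary 1 w.
Proof.
move=> hw; split => [hz|[u [_ hu]] r].
  exists (homotopy w); split; first exact: homotopy_chain hw.1.
  move=> A x; rewrite -(cycle_sub_proj_boundary hw) /proj_H1.
  case: ifP => [/andP [/andP [/eqP eA hQ] /eqP h2]|_]; last by rewrite subr0.
  rewrite eA; case: x hQ h2 => r k /= hQ ->.
  have := hz (resize_idx c.-1 r).
  by rewrite /H1_coef resize_low_exps_zero // => ->; rewrite subr0.
rewrite /H1_coef hu koszul_dE; apply: big1 => t tL.
have hE : on_E t.
  rewrite on_EE; move: tL; rewrite inE => tL.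
  have : nat_of_ord t != m.-1 by apply: contra tL => /eqP e; apply/eqP; apply: val_inj.
  by have := ltn_ord t; lia.
by rewrite /dcoef hE /= getE_resize_var oppr0 mul0r mulr0.
Qed.

Lemma H1_coef_Xfull j (w : chain) r : (j < c.-1)%N ->
  H1_coef (fun S => @Xfull K n j (w S)) r = Xe j (H1_coef w) r.
Proof. by move=> hj; rewrite /H1_coef /Xfull /Xe /= updE_resize //; lia. Qed.

Lemma H1_coef_Dfull j (w : chain) r : (j < c.-1)%N ->
  H1_coef (fun S => @Dfull K n j (w S)) r = De j (H1_coef w) r.
Proof.
move=> hj; rewrite /H1_coef /Dfull (_ : (j < n.-1)%N = true); last by lia.
by rewrite /De /= getE_resize (_ : (j < n.-1)%N = true) ?updE_resize //; lia.
Qed.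

End KoszulComplex.

Theorem lemma4p2 (K : fieldType) (n c : nat) :
  [pchar K] =i pred0 -> (1 <= c <= n)%N ->
  (* H_i = 0 for i <> 1 *)
  (forall i : nat, i != 1%N ->
     forall w : chainT K n c, is_cycle i w -> is_boundary i w) /\
  (* H_1 ~= E_{c-1}, as modules over K<X_1..X_{c-1}, d_1..d_{c-1}> *)
  (exists f : chainT K n c -> Idx c.-1 -> K,
     [/\ forall (a : K) (w1 w2 : chainT K n c), is_cycle 1 w1 -> is_cycle 1 w2 ->
           forall r, f (fun S x => a * w1 S x + w2 S x) r = a * f w1 r + f w2 r,
         forall w, is_cycle 1 w -> finsupp (f w),
         forall e : Idx c.-1 -> K, finsupp e ->
           exists w, is_cycle 1 w /\ forall r, f w r = e r,
         forall w, is_cycle 1 w -> ((forall r, f w r = 0) <-> is_boundary 1 w) &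
         forall j : nat, (j < c.-1)%N -> forall w, is_cycle 1 w ->
           (forall r, f (fun S => @Xfull K n j (w S)) r = Xe j (f w) r) /\
           (forall r, f (fun S => @Dfull K n j (w S)) r = De j (f w) r)]).
Proof.
move=> charK /andP [c_gt0 c_le_n]; split.
  by move=> i hi w; exact: cycle_is_boundary.
exists (H1_coef c_le_n); split => //.
- exact: H1_coef_finsupp.
- move=> e he; exists (H1_lift (K:=K) c_le_n e).
  by split; [exact: H1_lift_cycle | exact: H1_coef_lift].
- exact: H1_coef_eq0.
- by move=> j hj w _; split => r; [exact: H1_coef_Xfull | exact: H1_coef_Dfull].
Qed.
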